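(* Let $f:\mathbb{R}^p\to\mathbb{R}$ be convex and differentiable with Lipschitz gradient, $g_j:\mathbb{R}\to\mathbb{R}\cup\{+\infty\}$ proper closed convex, $g(x)=\sum_jg_j(x_j)$, and let $x^\star$ be a minimizer of $f+g$ satisfying $-\nabla f(x^\star)\in\operatorname{ri}(\partial g(x^\star))$, with $f$ $\mathcal{C}^2$ near $x^\star$. Let $\gamma_j>0$. Then for all $j\in\mathcal{S}^c$, $\operatorname{prox}_{\gamma_jg_j}$ is constant on a neighbourhood of $x^\star_j-\gamma_j\nabla_jf(x^\star)$. Moreover, the map $x\mapsto\operatorname{prox}_{\gamma_jg_j}(x_j-\gamma_j\nabla_jf(x))$ is differentiable at $x^\star$ with gradient $0$.
   Context: $\mathcal{S}=\mathcal{S}_{x^\star}=\{j:\partial g_j(x^\star_j)\text{ is a singleton}\}$, $\mathcal{S}^c=[p]\setminus\mathcal{S}$. $\operatorname{ri}$ denotes relative interior. $\operatorname{prox}_{\gamma h}(v)=\arg\min_y\frac1{2\gamma}(v-y)^2+h(y)$. *)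

From HB Require Import structures.
From mathcomp Require Import all_boot all_order all_algebra.
From mathcomp Require Import all_classical all_reals all_analysis.
Set Implicit Arguments. Unset Strict Implicit. Unset Printing Implicit Defensive.
Import Order.TTheory GRing.Theory Num.Theory.
Import numFieldNormedType.Exports.
Local Open Scope classical_set_scope.
Local Open Scope ring_scope.

Section Defs.
Variables (R : realType) (p : nat).
Notation V := 'rV[R]_p.

Definition evec (j : 'I_p) : V := delta_mx ord0 j.

Definition partial (f : V -> R) (j : 'I_p) (x : V) : R := 'D_(evec j) f x.

Definition grad (f : V -> R) (x : V) : V := \row_j partial f j x.

Definition convex_fun (f : V -> R) : Prop :=
  forall (x y : V) (t : R), (0 <= t <= 1)%R ->
    f (t *: x + (1 - t) *: y) <= t * f x + (1 - t) * f y.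

Definition lipschitz_grad (f : V -> R) : Prop :=
  exists L : R, forall x y : V, `|grad f x - grad f y| <= L * `|x - y|.

Definition C2_near (f : V -> R) (x0 : V) : Prop :=
  exists U : set V, [/\ open U, U x0 &
    forall x, U x -> forall i j : 'I_p,
      derivable (partial f j) x (evec i) /\
      {for x, continuous (partial (partial f j) i)}].

Definition proper_fun (h : R -> \bar R) : Prop :=
  (forall u, h u != -oo%E) /\ (exists u, h u != +oo%E).

Definition convex_efun (h : R -> \bar R) : Prop :=
  forall (u v t : R), (0 < t < 1)%R ->
    (h (t * u + (1 - t) * v)%R <= t%:E * h u + (1 - t)%R%:E * h v)%E.

Definition proper_closed_convex (h : R -> \bar R) : Prop :=
  [/\ proper_fun h, lower_semicontinuous h & convex_efun h].

Definition sepsum (gs : 'I_p -> R -> \bar R) (x : V) : \bar R :=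
  (\sum_(j < p) gs j (x ord0 j))%E.

Definition dotp (u v : V) : R := \sum_(j < p) u ord0 j * v ord0 j.

Definition subdiff (g : V -> \bar R) (x : V) : set V :=
  [set v | forall y : V, (g x + (dotp v (y - x))%:E <= g y)%E].

Definition subdiff1 (h : R -> \bar R) (u : R) : set R :=
  [set s | forall w : R, (h u + (s * (w - u))%R%:E <= h w)%E].

Definition aff_hull (C : set V) : set V :=
  [set y | exists (n : nat) (pts : 'I_n -> V) (w : 'I_n -> R),
     [/\ forall i, C (pts i), \sum_(i < n) w i = 1 &
         y = \sum_(i < n) w i *: pts i]].

Definition rel_int (C : set V) : set V :=
  [set x | C x /\ exists2 e : R, 0 < e &
     forall y, aff_hull C y -> `|y - x| < e -> C y].

(* the index set S_{x*} = { j : \partial g_j(x*_j) is a singleton } *)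
Definition supp_set (gs : 'I_p -> R -> \bar R) (x : V) : set 'I_p :=
  [set j | exists s : R, subdiff1 (gs j) (x ord0 j) = [set s]].

Definition prox (gamma : R) (h : R -> \bar R) (v : R) : R :=
  xget 0 [set y | forall z : R,
    (((v - y) ^+ 2 / (2 * gamma))%R%:E + h y <=
     ((v - z) ^+ 2 / (2 * gamma))%R%:E + h z)%E].

End Defs.

(* Since j is not in S, the subdifferential of g_j at xstar_j is a nondegenerate
   interval containing -grad_j f(xstar).  The subdifferential of the separable g is
   the product of those of the g_i, so moving -grad f(xstar) along coordinate j
   stays in the affine hull of the subdifferential of g; the relative-interior
   hypothesis therefore puts a whole ball around -grad_j f(xstar) inside the
   subdifferential of g_j at xstar_j.  By the optimality condition of the prox this
   means prox_{gamma_j g_j}(u) = xstar_j for all u near xstar_j - gamma_j grad_j f(xstar).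
   The forward step x |-> x_j - gamma_j grad_j f(x) is continuous because grad f
   is Lipschitz, so the composite is locally constant at xstar, hence
   differentiable with zero differential. *)

From HB Require Import structures.
From mathcomp Require Import all_boot all_order all_algebra.
From mathcomp Require Import all_classical all_reals all_analysis.
From mathcomp Require Import ring lra.
Import Order.TTheory GRing.Theory Num.Theory.
Import numFieldNormedType.Exports.
Local Open Scope classical_set_scope.
Local Open Scope ring_scope.
Set Implicit Arguments. Unset Strict Implicit. Unset Printing Implicit Defensive.

Section Vectors.
Variables (R : realType) (p : nat).
Implicit Types (u v : 'rV[R]_p) (c l : R).

Lemma evecZ_entry c (j i : 'I_p) : (c *: evec R j) ord0 i = if i == j then c else 0.
Proof. by rewrite !mxE /= eq_sym; case: eqP => _; rewrite ?mulr1 ?mulr0. Qed.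

Lemma norm_evec (j : 'I_p) : `|evec R j| = 1.
Proof.
rewrite -[LHS]/(mx_norm _) mx_normrE; apply/eqP; rewrite eq_le; apply/andP; split.
  apply: bigmax_le => // -[i k] _ /=.
  by rewrite !mxE /=; case: (_ == _); case: (_ == _); rewrite ?normr1 ?normr0.
by apply: le_trans (le_bigmax _ _ (ord0, j)); rewrite /= mxE !eqxx /= normr1.
Qed.

Lemma dotp_evecZ v c (j : 'I_p) : dotp v (c *: evec R j) = v ord0 j * c.
Proof.
rewrite /dotp (bigD1 j) //= evecZ_entry eqxx big1 ?addr0 // => i /negbTE nij.
by rewrite evecZ_entry nij mulr0.
Qed.

Lemma aff_hull_line (C : set 'rV[R]_p) u v l :
  C u -> C v -> aff_hull C ((1 - l) *: u + l *: v).
Proof.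
move=> Cu Cv; exists 2%N, (fun i : 'I_2 => if i == ord0 then u else v),
  (fun i : 'I_2 => if i == ord0 then 1 - l else l).
by split; [case=> [[|[]]] | rewrite !big_ord_recl big_ord0 /= addr0 ?subrK ..].
Qed.

End Vectors.

Lemma near_cst_differentiable (R : numFieldType) (V W : normedModType R) (F : V -> W) x c :
  (\forall y \near x, F y = c) -> differentiable F x /\ 'd F x = 0 :> (V -> W).
Proof.
(* ['d (cst c) x] merely names the zero linear map. *)
move=> Fc; set d0 : {linear V -> W} := 'd (cst c) x.
have d0E : d0 = 0 :> (V -> W) by exact: diff_cst.
have Fo : F \o shift x = cst (F x) + d0 +o_ (nbhs (0 : V)) id.
  apply/eqaddoP => e e0; near=> h.
  rewrite /= d0E (nbhs_singleton Fc) !fctE (_ : F (h + x) = c); last first.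
    by near: h; move: Fc; rewrite (near_shift 0) subr0.
  by rewrite addr0 subrr normr0 mulr_ge0 // ltW.
have dF : 'd F x = d0 :> (V -> W) by apply: diff_unique _ Fo; rewrite d0E => y; exact: cvg_cst.
split; last by rewrite dF.
by apply/diff_locallyP; rewrite dF; split => // y; rewrite d0E; exact: cvg_cst.
Unshelve. all: by end_near.
Qed.

Lemma lipschitz_grad_continuous (R : realType) p (f : 'rV[R]_p -> R) :
  lipschitz_grad f -> continuous (grad f).
Proof.
move=> [L HL] x; apply/(@cvgrPdist_le _ _ _ _ (nbhs_filter x)) => e e0.
have eL : 0 < e / (`|L| + 1) by rewrite divr_gt0 // ltr_pwDr.
apply/nbhs_ballP; exists (e / (`|L| + 1)) => // y; rewrite -ball_normE /= => /ltW dxy.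
apply: le_trans (HL x y) _; apply: le_trans (ler_wpM2r _ (ler_norm L)) _ => //.
apply: le_trans (ler_wpM2l _ dxy) _ => //.
by rewrite mulrCA ler_piMr ?ltW // ltr_pdivrMr ?ltr_pwDr // mul1r ltrDl.
Qed.

Lemma forward_step_continuous (R : realType) p (f : 'rV[R]_p -> R) j (gamma : R) :
  lipschitz_grad f -> continuous (fun x : 'rV[R]_p => x ord0 j - gamma * partial f j x).
Proof.
move=> /lipschitz_grad_continuous gc x.
have partialE : partial f j = fun y => grad f y ord0 j by apply/funext => y; rewrite mxE.
apply: (continuousB (f := fun y : 'rV[R]_p => y ord0 j) (g := fun y => gamma * partial f j y)).
  exact: coord_continuous.
apply: (continuousM (s := cst gamma)); first exact: cst_continuous.
rewrite partialE.
apply: (continuous_comp (f := grad f) (g := fun M : 'rV[R]_p => M ord0 j)); first exact: gc.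
exact: coord_continuous.
Qed.

Lemma sepsumD1 (R : realType) p (gs : 'I_p -> R -> \bar R) (y : 'rV[R]_p) i :
  sepsum gs y = (gs i (y ord0 i) + \sum_(k < p | k != i) gs k (y ord0 k))%E.
Proof. exact: bigD1. Qed.

Section SeparableSum.
Variables (R : realType) (p : nat) (gs : 'I_p -> R -> \bar R) (x : 'rV[R]_p).
Hypothesis proper_gs : forall i, proper_fun (gs i).

Lemma fin_num_of_subdiff_sepsum v :
  subdiff (sepsum gs) x v -> forall i, gs i (x ord0 i) \is a fin_num.
Proof.
move=> dv.
have /choice [u fin_u] : forall i, exists u, gs i u \is a fin_num.
  by move=> i; have [gNy [u gu]] := proper_gs i; exists u; rewrite fin_numE gNy.
have gy_fin : sepsum gs (\row_i u i) \is a fin_num.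
  by apply/sum_fin_numP => i _ _; rewrite mxE.
suff /sum_fin_numP gx_fin : sepsum gs x \is a fin_num by move=> i; exact: gx_fin.
rewrite fin_numE; apply/andP; split.
  by apply/eqP => /esum_eqNyP [i [_ _ gi]]; have [/(_ (x ord0 i))] := proper_gs i; rewrite gi.
apply/eqP => gx_oo; move: (dv (\row_i u i)) gy_fin; rewrite gx_oo addye //.
by rewrite leye_eq => /eqP ->.
Qed.

Lemma subdiff_sepsumP v :
  subdiff (sepsum gs) x v <-> forall i, subdiff1 (gs i) (x ord0 i) (v ord0 i).
Proof.
split=> [dv i w | dvi y]; last first.
  rewrite /sepsum /dotp -sumEFin -big_split /=.
  by apply: lee_sum => i _; rewrite !mxE; exact: dvi.
set c := w - x ord0 i.
have gx_fin := fin_num_of_subdiff_sepsum dv.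
have others : (\sum_(k < p | k != i) gs k ((x + c *: evec R i) ord0 k) =
    \sum_(k < p | k != i) gs k (x ord0 k))%E.
  by apply: eq_bigr => k /negbTE ki; rewrite mxE evecZ_entry ki addr0.
have others_fin : (\sum_(k < p | k != i) gs k (x ord0 k))%E \is a fin_num.
  by apply/sum_fin_numP => k _ _; exact: gx_fin.
have step : x + c *: evec R i - x = c *: evec R i by rewrite addrC addKr.
move: (dv (x + c *: evec R i)); rewrite step dotp_evecZ !(sepsumD1 _ _ i) others.
rewrite mxE evecZ_entry eqxx /c addrC subrK.
by rewrite addeAC leeD2rE.
Qed.

Lemma subdiff1_ball_of_rel_int v j :
  rel_int (subdiff (sepsum gs) x) v -> ~ supp_set gs x j ->
  exists2 e, 0 < e & forall t, `|t - v ord0 j| < e -> subdiff1 (gs j) (x ord0 j) t.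
Proof.
move=> [dv [e e0 near_v_in]] not_supp; exists e => // t dt.
have dvi := (subdiff_sepsumP v).1 dv.
have [s ds svj] : exists2 s, subdiff1 (gs j) (x ord0 j) s & s != v ord0 j.
  apply: contrapT => none; apply: not_supp; exists (v ord0 j).
  apply/seteqP; split=> [s ds | s /= ->]; last exact: dvi.
  by apply: contrapT => /eqP svj; apply: none; exists s.
pose w := v + (s - v ord0 j) *: evec R j.
have dw : subdiff (sepsum gs) x w.
  apply/subdiff_sepsumP => i; rewrite mxE evecZ_entry.
  by case: eqP => [->|_]; [rewrite addrC subrK | rewrite addr0].
pose l := (t - v ord0 j) / (s - v ord0 j).
have vt : (1 - l) *: v + l *: w = v + (t - v ord0 j) *: evec R j.
  rewrite scalerDr scalerA addrA -scalerDl subrK scale1r /l divfK //.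
  by rewrite subr_eq0.
have := near_v_in _ (aff_hull_line l dv dw).
rewrite vt (addrC v) addrK normrZ norm_evec mulr1 => /(_ dt) /subdiff_sepsumP /(_ j).
by rewrite mxE evecZ_entry eqxx subrK.
Qed.

End SeparableSum.

Section Prox.
Variables (R : realType) (gamma : R) (h : R -> \bar R).
Hypothesis gamma_gt0 : 0 < gamma.

Definition prox_obj (v y : R) : \bar R := (((v - y) ^+ 2 / (2 * gamma))%:E + h y)%E.

Lemma prox_obj_ge u v : h u \is a fin_num -> subdiff1 h u ((v - u) / gamma) ->
  forall z, (prox_obj v u + ((z - u) ^+ 2 / (2 * gamma))%:E <= prox_obj v z)%E.
Proof.
move=> + dhu z; have := dhu z; rewrite /prox_obj.
case: (h u) => [r| |] // + _; case: (h z) => [hz| |] //=; last by rewrite addey ?leey.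
rewrite -!EFinD !lee_fin => subgrad.
have expand : (v - z) ^+ 2 / (2 * gamma) =
    (v - u) ^+ 2 / (2 * gamma) - (v - u) / gamma * (z - u) + (z - u) ^+ 2 / (2 * gamma).
  by field; rewrite gt_eqF ?mulr_gt0.
lra.
Qed.

Lemma prox_eq_of_subdiff1 u v : h u \is a fin_num -> subdiff1 h u ((v - u) / gamma) ->
  prox gamma h v = u.
Proof.
move=> hu_fin dhu; have obj_ge := prox_obj_ge hu_fin dhu.
have sq_ge0 z : (0 <= ((z - u) ^+ 2 / (2 * gamma))%:E)%E.
  by rewrite lee_fin divr_ge0 ?sqr_ge0 ?mulr_ge0 ?ltW.
apply: xget_unique => [z | y y_min]; first exact: le_trans (leeDl _ (sq_ge0 z)) (obj_ge z).
have obj_fin : prox_obj v u \is a fin_num by rewrite fin_numD hu_fin.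
have : (prox_obj v u + ((y - u) ^+ 2 / (2 * gamma))%:E <= prox_obj v u + 0)%E.
  by rewrite adde0; exact: le_trans (obj_ge y) (y_min u).
rewrite leeD2lE // lee_fin pmulr_lle0 ?invr_gt0 ?mulr_gt0 // => sq_le0.
by apply/eqP; rewrite -subr_eq0 -sqrf_eq0 eq_le sq_le0 sqr_ge0.
Qed.

Lemma prox_near_cst u s : h u \is a fin_num ->
  (exists2 e, 0 < e & forall t, `|t - s| < e -> subdiff1 h u t) ->
  \forall w \near u + gamma * s, prox gamma h w = u.
Proof.
move=> hu_fin [e e0 ball_sub]; apply/nbhs_ballP.
exists (gamma * e) => [|w]; first exact: mulr_gt0.
rewrite -ball_normE /= => dw; apply: prox_eq_of_subdiff1 => //; apply: ball_sub.
have -> : (w - u) / gamma - s = (w - (u + gamma * s)) / gamma by field; rewrite gt_eqF.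
by rewrite normrM normfV (gtr0_norm gamma_gt0) ltr_pdivrMr // distrC [e * _]mulrC.
Qed.

End Prox.

Theorem lemma3 (R : realType) (p : nat) (f : 'rV[R]_p -> R)
  (gs : 'I_p -> R -> \bar R) (xstar : 'rV[R]_p) (gamma : 'I_p -> R) :
  convex_fun f ->
  (forall x, differentiable f x) ->
  lipschitz_grad f ->
  (forall j, proper_closed_convex (gs j)) ->
  (forall y, ((f xstar)%:E + sepsum gs xstar <= (f y)%:E + sepsum gs y)%E) ->
  rel_int (subdiff (sepsum gs) xstar) (- grad f xstar) ->
  C2_near f xstar ->
  (forall j, 0 < gamma j) ->
  forall j : 'I_p, ~ supp_set gs xstar j ->
    (exists c : R, \forall u \near (xstar ord0 j - gamma j * partial f j xstar),
        prox (gamma j) (gs j) u = c) /\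
    (let F := fun x : 'rV[R]_p =>
        prox (gamma j) (gs j) (x ord0 j - gamma j * partial f j x) in
     differentiable F xstar /\ forall v : 'rV[R]_p, 'd F xstar v = 0).
Proof.
move=> _ _ lip_grad gs_pcc _ ri_grad _ gamma_gt0 j not_supp.
have proper_gs i : proper_fun (gs i) by have [] := gs_pcc i.
have gx_fin := fin_num_of_subdiff_sepsum proper_gs ri_grad.1.
have := prox_near_cst (gamma_gt0 j) (gx_fin j)
  (subdiff1_ball_of_rel_int proper_gs ri_grad not_supp).
rewrite !mxE mulrN => prox_cst.
split; first by exists (xstar ord0 j).
move=> F; have F_cst : \forall x \near xstar, F x = xstar ord0 j.
  exact: forward_step_continuous j (gamma j) lip_grad xstar _ prox_cst.
have [dF dF0] := near_cst_differentiable F_cst.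
by split=> // v; rewrite dF0.
Qed.
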